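(* (Wedderburn Formula.) Let $t\in\mathbb{R}$, let $D$ be a nonconstant complex polynomial with $\mu_a$ the multiplicity of each root $a$. The remainder of the division of the generalized polynomial $e^{tX}$ by $D$ (the unique polynomial $R$ of degree $<\deg D$ with $e^{tX}=Dq+R$, $q$ a generalized polynomial) is $$\sum_{D(a)=0}J_a^{\mu_a-1}\!\left(e^{tX}\frac{(X-a)^{\mu_a}}{D(X)}\right)\frac{D(X)}{(X-a)^{\mu_a}},$$ where $J_a^{\mu}(e^{tX}g(X))$, for a rational fraction $g$ without pole at $a$ and $\mu\ge0$, is the unique polynomial of degree $\le\mu$ congruent modulo $(X-a)^{\mu+1}$ to $e^{at}J_a^\mu(g)\sum_{n=0}^{\mu}\frac{t^n(X-a)^n}{n!}$.
   Context: A generalized polynomial is a family $f=(f_a)_{a\in\mathbb{C}}$ with $f_a=\sum_{n\ge0}f_{a,n}(X-a)^n\in\mathbb{C}[[X-a]]$, with componentwise operations; complex polynomials and rational fractions without poles are identified with families of their Taylor expansions. $e^{tX}$ is the generalized polynomial $\big(e^{at}\sum_{n\ge0}\frac{t^n(X-a)^n}{n!}\big)_{a\in\mathbb{C}}$. $J_a^{m}(h):=\sum_{n\le m}h_{a,n}(X-a)^n$. *)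

From HB Require Import structures.
From mathcomp Require Import all_boot all_order all_algebra.
From mathcomp Require Import reals sequences trigo.
From mathcomp Require Export complex.

Set Implicit Arguments.
Unset Strict Implicit.
Unset Printing Implicit Defensive.

Import Order.TTheory GRing.Theory Num.Theory.
Local Open Scope ring_scope.
Local Open Scope complex_scope.

Section Defs.
Variable R : realType.
Local Notation C := R[i].

Definition cexp (z : C) : C :=
  let: x +i* y := z in (expR x)%:C * (cos y +i* sin y).

(* A generalized polynomial: a family (f_a)_{a in C} of formal power series,
   f_a = sum_n f a n (X - a)^n. *)
Definition gpoly := C -> nat -> C.

Definition gadd (f g : gpoly) : gpoly := fun a n => f a n + g a n.
Definition gmul (f g : gpoly) : gpoly :=
  fun a n => \sum_(i < n.+1) f a i * g a (n - i)%N.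

Definition taylor (p : {poly C}) (a : C) (n : nat) : C :=
  (p \Po ('X + a%:P))`_n.

Definition gpoly_of_poly (p : {poly C}) : gpoly := fun a => taylor p a.

Definition gexp (t : R) : gpoly :=
  fun a n => cexp (a * t%:C) * (t%:C ^+ n / (n`!)%:R).

(* inverse of a formal power series c with c 0 != 0 (first n+1 coefficients) *)
Fixpoint sinv_seq (c : nat -> C) (n : nat) : seq C :=
  match n with
  | 0 => [:: (c 0%N)^-1]
  | n'.+1 => let s := sinv_seq c n' in
      rcons s (- (c 0%N)^-1 * \sum_(j < n'.+1) c j.+1 * nth 0 s (n' - j)%N)
  end.
Definition sinv (c : nat -> C) (n : nat) : C := nth 0 (sinv_seq c n) n.

Definition jet (h : nat -> C) (a : C) (m : nat) : {poly C} :=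
  \sum_(n < m.+1) h n *: ('X - a%:P) ^+ n.

(* Taylor expansion at a of the rational fraction (X-a)^mu / D = 1 / E,
   where E = D / (X-a)^mu, mu = multiplicity of a *)
Definition cofactor (D : {poly C}) (a : C) : {poly C} :=
  D %/ ('X - a%:P) ^+ (mup a D).

(* J_a^{mu_a - 1}( e^{tX} (X-a)^{mu_a} / D(X) ) * D(X) / (X-a)^{mu_a} *)
Definition wedderburn_term (t : R) (D : {poly C}) (a : C) : {poly C} :=
  let E := cofactor D a in
  let g : gpoly := fun _ => sinv (taylor E a) in
  jet (gmul (gexp t) g a) a (mup a D).-1 * E.

(* sum over the roots of D, enumerated without repetition by rs *)
Definition wedderburn (t : R) (D : {poly C}) (rs : seq C) : {poly C} :=
  \sum_(a <- rs) wedderburn_term t D a.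

End Defs.

From Pilot Require Import Defs.
From HB Require Import structures.
From mathcomp Require Import all_boot all_order all_algebra.
From mathcomp Require Import reals complex.
From mathcomp Require Import zify ring.
From mathcomp Require Import boolp.

(* Write
   [mu_a] for the multiplicity of a root [a] of [D] and [E_a := D / (X - a)^mu_a].
   A polynomial of degree < deg D is the remainder of e^{tX} iff at every root
   [a] its Taylor coefficients below [mu_a] are those of e^{tX}: then at every
   point [a] the series e^{tX} - Rem is divisible by [D = E_a (X - a)^mu_a],
   with quotient ((e^{tX} - Rem) / (X - a)^mu_a) E_a^-1 as [E_a(a) <> 0]; and
   two such polynomials differ by a multiple of every [(X - a)^mu_a], hence of
   [D], of degree < deg D. The Wedderburn sum has degree < deg D, and at a root
   [a] all its terms but the [a]-th are multiples of some [E_b], hence of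
   [(X - a)^mu_a], while the [a]-th, [J(e^{tX} E_a^-1) E_a], agrees with e^{tX}
   below [mu_a]. *)

Set Implicit Arguments.
Unset Strict Implicit.
Unset Printing Implicit Defensive.

Import GRing.Theory Num.Theory.
Local Open Scope ring_scope.

Section CauchyProduct.
Variable F : comNzRingType.
Implicit Types (f g : nat -> F) (p q : {poly F}).

Definition cauchy f g n := \sum_(i < n.+1) f i * g (n - i)%N.

Lemma coefM_take_polyl N p q n : (n < N)%N -> (take_poly N p * q)`_n = (p * q)`_n.
Proof.
move=> ltnN; rewrite !coefM; apply: eq_bigr => i _.
by rewrite coef_take_poly (leq_ltn_trans _ ltnN) // -ltnS.
Qed.

Lemma coefM_take_polyr N p q n : (n < N)%N -> (p * take_poly N q)`_n = (p * q)`_n.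
Proof. by move=> ltnN; rewrite mulrC coefM_take_polyl // mulrC. Qed.

Lemma cauchy_coef f g N n :
  (n < N)%N -> cauchy f g n = (\poly_(i < N) f i * \poly_(i < N) g i)`_n.
Proof.
move=> ltnN; rewrite coefM; apply: eq_bigr => i _.
have ltiN : (i < N)%N by rewrite (leq_ltn_trans _ ltnN) // -ltnS.
by rewrite !coef_poly ltiN (leq_ltn_trans (leq_subr _ _) ltnN).
Qed.

Lemma poly_cauchy f g N :
  \poly_(n < N) cauchy f g n =
  take_poly N (\poly_(i < N) f i * \poly_(i < N) g i).
Proof.
apply/polyP => n; rewrite coef_take_poly coef_poly.
by case: ifP => // /cauchy_coef ->.
Qed.

Section SeriesInverse.
Variables (E : {poly F}) (einv : nat -> F).
Hypothesis einvP : cauchy einv (fun i => E`_i) =1 (fun n => (n == 0)%:R).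

Lemma take_poly_mul_inv N :
  (0 < N)%N -> take_poly N (\poly_(i < N) einv i * E) = 1.
Proof.
move=> N_gt0; apply/polyP => n; rewrite coef_take_poly coef1.
case: ltnP => [ltnN|leNn]; last by rewrite gtn_eqF // (leq_trans N_gt0).
by rewrite -(coefM_take_polyr (N := N)) // /take_poly -cauchy_coef.
Qed.

Lemma coef_poly_cauchy_invM (e : nat -> F) mu n :
  (n < mu)%N -> (\poly_(k < mu) cauchy e einv k * E)`_n = e n.
Proof.
move=> ltnmu; have mu_gt0 : (0 < mu)%N by apply: leq_ltn_trans ltnmu.
rewrite poly_cauchy coefM_take_polyl // -mulrA -(coefM_take_polyr (N := mu)) //.
by rewrite take_poly_mul_inv // mulr1 coef_poly ltnmu.
Qed.

Lemma cauchy_mulXn_div (s : nat -> F) mu :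
  (forall n, (n < mu)%N -> s n = 0) ->
  cauchy (fun i => (E * 'X^mu)`_i) (cauchy (fun k => s (k + mu)%N) einv) =1 s.
Proof.
move=> s_small n; rewrite (cauchy_coef _ _ (ltnSn n)) poly_cauchy.
rewrite [\poly_(_ < _) _](_ : _ = take_poly n.+1 (E * 'X^mu)) //.
rewrite coefM_take_polyl // coefM_take_polyr //.
set ps := \poly_(_ < _) _; set pinv := \poly_(_ < _) _.
have -> : E * 'X^mu * (ps * pinv) = 'X^mu * ps * (pinv * E) by ring.
rewrite -(coefM_take_polyr (N := n.+1)) // take_poly_mul_inv // mulr1.
rewrite coefXnM coef_poly.
case: ltnP => [/s_small -> // | le_mu_n].
by rewrite subnK // ifT // ltnS leq_subr.
Qed.

End SeriesInverse.
End CauchyProduct.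

Section TaylorShift.
Variable F : fieldType.
Implicit Types (p : {poly F}) (a : F).

Lemma comp_XsubC_XaddC a : ('X - a%:P) \Po ('X + a%:P) = 'X.
Proof. by rewrite comp_polyB comp_polyX comp_polyC addrK. Qed.

Lemma comp_XsubCX_XaddC a n : ('X - a%:P) ^+ n \Po ('X + a%:P) = 'X^n.
Proof. by rewrite rmorphXn /= comp_XsubC_XaddC. Qed.

Lemma coef0_comp_XaddC p a : (p \Po ('X + a%:P))`_0 = p.[a].
Proof. by rewrite -horner_coef0 horner_comp hornerD hornerX hornerC add0r. Qed.

Lemma XsubCX_dvdpP p a m :
  reflect (forall n, (n < m)%N -> (p \Po ('X + a%:P))`_n = 0)
          (('X - a%:P) ^+ m %| p).
Proof.
apply: (iffP idP) => [/divpK <- n ltnm | low0].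
  by rewrite comp_polyM comp_XsubCX_XaddC coefMXn ltnm.
have take0 : take_poly m (p \Po ('X + a%:P)) = 0.
  by apply/polyP => n; rewrite coef_take_poly coef0; case: ifP => // /low0.
rewrite -(comp_polyXaddC_K p a) -(poly_take_drop m (p \Po _)) take0 add0r.
by rewrite comp_polyM comp_Xn_poly dvdp_mulIr.
Qed.

Lemma coef_comp_XaddC_lt_mup p a n :
  (n < mup a p)%N -> (p \Po ('X + a%:P))`_n = 0.
Proof.
have [-> | p_neq0] := eqVneq p 0; first by rewrite comp_poly0 coef0.
by apply/XsubCX_dvdpP; rewrite -mup_geq.
Qed.

Lemma prod_XsubCX_dvdp (rs : seq F) (k : F -> nat) p : uniq rs ->
  (forall a, a \in rs -> ('X - a%:P) ^+ k a %| p) ->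
  \prod_(a <- rs) ('X - a%:P) ^+ k a %| p.
Proof.
elim: rs => [|a rs IH] /=; first by rewrite big_nil dvd1p.
move=> /andP[a_notin uniq_rs] dvd_p; rewrite big_cons Gauss_dvdp.
  rewrite dvd_p ?mem_head // IH // => b b_in.
  by rewrite dvd_p // in_cons b_in orbT.
rewrite coprimep_expl // coprimep_sym coprimep_XsubC /root horner_prod.
rewrite prodf_seq_neq0; apply/allP => b b_in /=.
rewrite horner_exp hornerXsubC expf_neq0 // subr_eq0.
by apply: contraNneq a_notin => ->.
Qed.

End TaylorShift.

Section ClosedFieldDivisibility.
Variable F : closedFieldType.
Variables (D : {poly F}) (rs : seq F).
Hypotheses (D_neq0 : D != 0) (uniq_rs : uniq rs).
Hypothesis roots_in_rs : forall a, root D a -> a \in rs.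

(* [D] is a constant times the product of the [(X - a)^(mup a D)]: a nonconstant
   cofactor would have a root. *)
Lemma dvdp_of_mup (P : {poly F}) :
  (forall a, a \in rs -> ('X - a%:P) ^+ mup a D %| P) -> D %| P.
Proof.
move=> dvd_P; set Q := \prod_(a <- rs) ('X - a%:P) ^+ mup a D.
have dvd_QD : Q %| D by apply: prod_XsubCX_dvdp => // a _; rewrite -mup_geq.
have def_D : D = (D %/ Q) * Q by rewrite divpK.
have no_root b : ~~ root (D %/ Q) b.
  apply/negP => root_b; have b_in : b \in rs.
    by apply/roots_in_rs; rewrite def_D rootM root_b.
  suff : ('X - b%:P) ^+ (mup b D).+1 %| D by rewrite -mup_geq // ltnn.
  rewrite {2}def_D exprS dvdp_mul ?dvdp_XsubCl //.
  by rewrite /Q (bigD1_seq b) //= dvdp_mulIl.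
have /size_poly1P[k k_neq0 def_DQ] : size (D %/ Q) == 1%N.
  by apply: contraT => /closed_rootP[x root_x]; have := no_root x; rewrite root_x.
by rewrite def_D def_DQ mul_polyC dvdpZl // prod_XsubCX_dvdp.
Qed.

Lemma eq_poly_of_taylor_mup (P Q : {poly F}) :
  (size P < size D)%N -> (size Q < size D)%N ->
  (forall a n, a \in rs -> (n < mup a D)%N ->
     (P \Po ('X + a%:P))`_n = (Q \Po ('X + a%:P))`_n) ->
  P = Q.
Proof.
move=> sizeP sizeQ eq_low; apply/eqP; rewrite -subr_eq0; apply/eqP.
have : D %| P - Q.
  apply: dvdp_of_mup => a a_in; apply/XsubCX_dvdpP => n ltn_mu.
  by rewrite comp_polyB coefB eq_low ?subrr.
apply: contraTeq => PQ_neq0.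
rewrite gtNdvdp // (leq_ltn_trans (size_polyD _ _)) //.
by rewrite size_polyN gtn_max sizeP sizeQ.
Qed.

End ClosedFieldDivisibility.

Section Wedderburn.
Variable R : realType.
Local Notation C := R[i].
Local Notation cofactor := (@Defs.cofactor R).
Implicit Types (D : {poly C}) (a : C).

Lemma size_sinv_seq (c : nat -> C) n : size (sinv_seq c n) = n.+1.
Proof. by elim: n => [|n IH] //=; rewrite size_rcons IH. Qed.

Lemma nth_sinv_seq (c : nat -> C) n k :
  (k <= n)%N -> nth 0 (sinv_seq c n) k = sinv c k.
Proof.
elim: n => [|n IH]; first by rewrite leqn0 => /eqP ->.
rewrite leq_eqVlt => /orP[/eqP -> // | ltkn].
by rewrite /= nth_rcons size_sinv_seq ltkn IH.
Qed.

Lemma sinvS (c : nat -> C) n :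
  sinv c n.+1 = - (c 0%N)^-1 * \sum_(j < n.+1) c j.+1 * sinv c (n - j)%N.
Proof.
rewrite /sinv /= nth_rcons size_sinv_seq ltnn eqxx; congr (_ * _).
by apply: eq_bigr => j _; rewrite nth_sinv_seq // leq_subr.
Qed.

Lemma sinvP (c : nat -> C) : c 0%N != 0 ->
  cauchy (sinv c) c =1 (fun n => (n == 0)%:R).
Proof.
move=> c0_neq0 [|n]; first by rewrite /cauchy big_ord1 /sinv /= mulVf.
rewrite /cauchy big_ord_recr /= subnn sinvS mulrAC mulNr mulVf // mulN1r.
rewrite (reindex_inj rev_ord_inj) /= -sumrB big1 // => j _.
apply/eqP; rewrite subr_eq0 mulrC; apply/eqP.
have lt_jn := ltn_ord j; congr (c _ * sinv c _); lia.
Qed.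

Lemma cofactorK D a : cofactor D a * ('X - a%:P) ^+ mup a D = D.
Proof.
have [-> | D_neq0] := eqVneq D 0; first by rewrite /cofactor div0p mul0r.
by rewrite /cofactor divpK // -mup_geq.
Qed.

Lemma cofactor_neq0 D a : D != 0 -> cofactor D a != 0.
Proof. by apply: contraNneq => E0; rewrite -(cofactorK D a) E0 mul0r. Qed.

Lemma cofactor_nroot D a : D != 0 -> ~~ root (cofactor D a) a.
Proof.
move=> D_neq0; have XaX_neq0 : ('X - a%:P) ^+ mup a D != 0.
  by rewrite expf_neq0 // polyXsubC_eq0.
have : mup a D = (mup a (cofactor D a) + mup a D)%N.
  by rewrite -{1}(cofactorK D a) mupM ?cofactor_neq0 // mup_XsubCX eqxx.
rewrite -dvdp_XsubCl XsubC_dvd ?cofactor_neq0 //; lia.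
Qed.

Lemma size_cofactor D a : D != 0 ->
  size D = (size (cofactor D a) + mup a D)%N.
Proof.
move=> D_neq0; rewrite -{1}(cofactorK D a) size_mul ?cofactor_neq0 //.
  by rewrite size_exp_XsubC addnS.
by rewrite expf_neq0 // polyXsubC_eq0.
Qed.

Lemma dvdp_cofactor D a b : D != 0 -> b != a ->
  ('X - b%:P) ^+ mup b D %| cofactor D a.
Proof.
move=> D_neq0 neq_ba; have : ('X - b%:P) ^+ mup b D %| D by rewrite -mup_geq.
rewrite -{2}(cofactorK D a) Gauss_dvdpl // coprimep_expl // coprimep_expr //.
by rewrite coprimep_XsubC2 // subr_eq0 eq_sym.
Qed.

Lemma comp_XaddC_cofactor D a :
  D \Po ('X + a%:P) = (cofactor D a \Po ('X + a%:P)) * 'X^(mup a D).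
Proof. by rewrite -{1}(cofactorK D a) comp_polyM comp_XsubCX_XaddC. Qed.

Lemma cofactor_sinvP D a : D != 0 ->
  cauchy (sinv (taylor (cofactor D a) a))
         (fun i => (cofactor D a \Po ('X + a%:P))`_i) =1 (fun n => (n == 0)%:R).
Proof.
by move=> D_neq0; apply: sinvP; rewrite /taylor coef0_comp_XaddC cofactor_nroot.
Qed.

Lemma comp_XaddC_jet (h : nat -> C) a m :
  jet h a m \Po ('X + a%:P) = \poly_(n < m.+1) h n.
Proof.
rewrite /jet raddf_sum /= poly_def; apply: eq_bigr => n _.
by rewrite comp_polyZ comp_XsubCX_XaddC.
Qed.

Lemma size_jet (h : nat -> C) a m : (size (jet h a m) <= m.+1)%N.
Proof.
rewrite -(comp_polyXaddC_K (jet h a m) a) comp_XaddC_jet.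
apply: leq_trans (size_comp_poly_leq _ _) _; rewrite size_XsubC muln1.
by rewrite ltnS -subn1 leq_subLR add1n size_poly.
Qed.

Variables (t : R) (D : {poly C}) (rs : seq C).
Hypotheses (D_neq0 : D != 0) (uniq_rs : uniq rs).

Lemma coef_comp_XaddC_wedderburn a n : a \in rs -> (n < mup a D)%N ->
  (wedderburn t D rs \Po ('X + a%:P))`_n = gexp t a n.
Proof.
move=> a_in ltn_mu; rewrite /wedderburn raddf_sum coef_sum (bigD1_seq a) //=.
rewrite big1 ?addr0 => [|b neq_ba]; last first.
  have : ('X - a%:P) ^+ mup a D %| wedderburn_term t D b.
    by rewrite dvdp_mull // dvdp_cofactor // eq_sym.
  by move/XsubCX_dvdpP/(_ n ltn_mu).
rewrite /wedderburn_term comp_polyM comp_XaddC_jet.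
rewrite prednK ?(leq_ltn_trans _ ltn_mu) //.
exact: (coef_poly_cauchy_invM (cofactor_sinvP a D_neq0) (gexp t a) ltn_mu).
Qed.

Lemma size_wedderburn : (forall a, a \in rs -> root D a) ->
  (size (wedderburn t D rs) < size D)%N.
Proof.
move=> rs_roots; rewrite /wedderburn big_seq.
elim/big_ind: _ => [|p q sp sq|a a_in]; first by rewrite size_poly0 size_poly_gt0.
  by rewrite (leq_ltn_trans (size_polyD _ _)) // gtn_max sp sq.
have mu_gt0 : (0 < mup a D)%N by rewrite -XsubC_dvd // dvdp_XsubCl rs_roots.
rewrite /wedderburn_term (leq_ltn_trans (size_polyMleq _ _)) //.
set J := jet _ _ _; have size_J : (size J <= mup a D)%N.
  by rewrite -[X in (_ <= X)%N](prednK mu_gt0) size_jet.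
apply: (@leq_ltn_trans (mup a D + size (cofactor D a)).-1).
  by rewrite -!subn1 leq_sub2r // leq_add2r.
by rewrite (size_cofactor a D_neq0) addnC ltn_predL addn_gt0 mu_gt0 orbT.
Qed.

Lemma coef_comp_XaddC_remainder (q : gpoly R) (Rem : {poly C}) a n :
  gexp t = gadd (gmul (gpoly_of_poly D) q) (gpoly_of_poly Rem) ->
  (n < mup a D)%N -> (Rem \Po ('X + a%:P))`_n = gexp t a n.
Proof.
move=> -> ltn_mu; rewrite /gadd /gmul big1 ?add0r // => i _.
rewrite /gpoly_of_poly /taylor coef_comp_XaddC_lt_mup ?mul0r //.
by rewrite (leq_ltn_trans _ ltn_mu) // -ltnS.
Qed.

(* [q_a = ((e^{tX} - W) / (X - a)^(mup a D)) / E_a] as power series in [X - a]. *)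
Definition wedderburn_quotient : gpoly R := fun a =>
  cauchy (fun n => gexp t a (n + mup a D)
                  - taylor (wedderburn t D rs) a (n + mup a D))
         (sinv (taylor (cofactor D a) a)).

Lemma gexp_wedderburn_divmod : (forall a, root D a -> a \in rs) ->
  gexp t = gadd (gmul (gpoly_of_poly D) wedderburn_quotient)
                (gpoly_of_poly (wedderburn t D rs)).
Proof.
move=> roots_in_rs; apply/funext => a; apply/funext => n.
pose s k := gexp t a k - taylor (wedderburn t D rs) a k.
have s_small k : (k < mup a D)%N -> s k = 0.
  have [a_in | a_notin] := boolP (a \in rs).
    by move=> ltk; rewrite /s /taylor coef_comp_XaddC_wedderburn ?subrr.
  by rewrite mupNroot ?ltn0 //; apply: contra a_notin; exact: roots_in_rs.
have := cauchy_mulXn_div (cofactor_sinvP a D_neq0) s_small n.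
rewrite -comp_XaddC_cofactor => divmod_n.
by rewrite /gadd -[gmul _ _ a n]/(cauchy _ _ n) divmod_n /s subrK.
Qed.

End Wedderburn.

Theorem mainTheorem5 (R : realType) (t : R) (D : {poly R[i]}) (rs : seq R[i]) :
  (1 < size D)%N ->
  uniq rs ->
  (forall a : R[i], root D a <-> a \in rs) ->
  forall Rem : {poly R[i]},
    ((size Rem < size D)%N /\
     exists q : gpoly R,
       gexp t = gadd (gmul (gpoly_of_poly D) q) (gpoly_of_poly Rem))
    <-> Rem = wedderburn t D rs.
Proof.
move=> size_D uniq_rs roots_rs Rem.
have D_neq0 : D != 0 by rewrite -size_poly_gt0 (ltn_trans _ size_D).
have size_W := size_wedderburn t D_neq0 (fun a => (roots_rs a).2).
split=> [[size_Rem [q divmod]] | ->]; last first.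
  split=> //; exists (wedderburn_quotient t D rs).
  by apply: gexp_wedderburn_divmod => // a /roots_rs.
apply: (eq_poly_of_taylor_mup D_neq0 uniq_rs _ size_Rem size_W).
  by move=> a /roots_rs.
move=> a n a_in ltn_mu.
by rewrite (coef_comp_XaddC_remainder divmod ltn_mu) coef_comp_XaddC_wedderburn.
Qed.
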